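(* If $n\ge 1$ and $k\ge 2$ are integers, then the $k$-Pell graph $\Pi_{n,k}$ is a median graph.
   Context: For an integer $k\ge 2$, a $k$-Pell string is a finite word over the alphabet $\{0,1,\ldots,k-1,kk\}$, i.e. a word over $\{0,1,\ldots,k\}$ in which every maximal run of the letter $k$ has even length. For $n\ge 0$, the $k$-Pell graph $\Pi_{n,k}$ has as vertices all $k$-Pell strings of length $n$, and two vertices are adjacent if one is obtained from the other either by replacing a single letter $i$ by $i+1$ (or vice versa) for some $i\in\{0,1,\ldots,k-2\}$, or by replacing one factor $(k-1)(k-1)$ by $kk$ (or vice versa), in such a way that the resulting string is again a $k$-Pell string. A connected graph $G$ is a median graph if every triple $x,y,z$ of vertices has a unique median, i.e. a unique vertex lying simultaneously on a shortest $x,y$-path, a shortest $x,z$-path and a shortest $y,z$-path. *)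

From mathcomp Require Import all_boot.
Set Implicit Arguments. Unset Strict Implicit. Unset Printing Implicit Defensive.

(* k-Pell strings: words over {0,...,k} that parse as words over the
   alphabet {0,1,...,k-1,kk}; i.e. every letter is <= k and every maximal
   run of the letter k has even length. *)
Fixpoint pell_word (k : nat) (s : seq nat) : bool :=
  match s with
  | [::] => true
  | a :: t =>
      if a == k then
        match t with
        | b :: t' => (b == k) && pell_word k t'
        | [::] => false
        end
      else (a < k) && pell_word k t
  end.

Definition pell_vertex (n k : nat) (s : seq nat) : Prop :=
  size s = n /\ pell_word k s.

Definition pell_step1 (k : nat) (u v : seq nat) : Prop :=
  exists p j, p < size u /\ j.+1 < k /\ nth 0 u p = j /\ v = set_nth 0 u p j.+1.

Definition pell_step2 (k : nat) (u v : seq nat) : Prop :=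
  exists p, p.+1 < size u /\ nth 0 u p = k.-1 /\ nth 0 u p.+1 = k.-1 /\
            v = set_nth 0 (set_nth 0 u p k) p.+1 k.

Definition pell_adj (n k : nat) (u v : seq nat) : Prop :=
  pell_vertex n k u /\ pell_vertex n k v /\
  (pell_step1 k u v \/ pell_step1 k v u \/ pell_step2 k u v \/ pell_step2 k v u).

Section Graphs.
Variables (V : eqType) (vert : V -> Prop) (adj : V -> V -> Prop).

(* walk x p : x :: p is a walk (consecutive vertices adjacent); its end is
   last x p and its length is size p. *)
Fixpoint walk (x : V) (p : seq V) : Prop :=
  match p with
  | [::] => vert x
  | y :: p' => adj x y /\ walk y p'
  end.

Definition connected_graph : Prop :=
  forall x y, vert x -> vert y -> exists p, walk x p /\ last x p = y.

Definition on_shortest_path (x y w : V) : Prop :=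
  exists p, walk x p /\ last x p = y /\ w \in x :: p /\
    forall q, walk x q -> last x q = y -> size p <= size q.

Definition is_median (x y z m : V) : Prop :=
  vert m /\ on_shortest_path x y m /\ on_shortest_path x z m /\
  on_shortest_path y z m.

Definition median_graph : Prop :=
  connected_graph /\
  forall x y z, vert x -> vert y -> vert z ->
    exists m, is_median x y z m /\ forall m', is_median x y z m' -> m' = m.
End Graphs.

Definition pell_graph_median (n k : nat) : Prop :=
  median_graph (pell_vertex n k) (pell_adj n k).

From mathcomp Require Import all_boot ssrint zify.
Set Implicit Arguments. Unset Strict Implicit.

(* Code a k-Pell string cell by cell: a letter a < k becomes (a, false) and a
   factor kk becomes (k-1, true), (k-1, false).  Every edge of Pi_{n,k} then
   moves the code by one in the l1 distance of the n-th power of the grid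
   {0..k-1} x {0,1}, and of two distinct strings one always has a neighbour
   closer to the other, so the graph distance is this l1 distance.  Medians in
   the product are unique and coordinatewise (median of the numbers, majority
   of the bits), and the codes are closed under them: a majority of true bits
   at some place forces a majority of (k-1, true) cells there, each followed by
   (k-1, false). *)

Definition between (T : Type) (d : T -> T -> nat) (x y m : T) :=
  d x m + d m y = d x y.

Section L1Distance.
Variables (T : Type) (d : T -> T -> nat).

Fixpoint l1dist (X Y : seq T) : nat :=
  match X, Y with x :: X', y :: Y' => d x y + l1dist X' Y' | _, _ => 0 end.

Lemma l1dist_cat X1 X2 Y1 Y2 : size X1 = size Y1 ->
  l1dist (X1 ++ X2) (Y1 ++ Y2) = l1dist X1 Y1 + l1dist X2 Y2.
Proof. by elim: X1 Y1 => [|x X IH] [|y Y] //= [/IH ->]; rewrite addnA. Qed.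

Hypothesis d_refl : forall x, d x x = 0.
Hypothesis d_sym : forall x y, d x y = d y x.
Hypothesis d_triangle : forall x y z, d x z <= d x y + d y z.

Lemma l1dist_refl X : l1dist X X = 0.
Proof. by elim: X => //= x X ->; rewrite d_refl. Qed.

Lemma l1dist_sym X Y : l1dist X Y = l1dist Y X.
Proof. by elim: X Y => [|x X IH] [|y Y] //=; rewrite d_sym IH. Qed.

Lemma l1dist_triangle X Y Z : size X = size Y -> size Y = size Z ->
  l1dist X Z <= l1dist X Y + l1dist Y Z.
Proof.
elim: X Y Z => [|x X IH] [|y Y] [|z Z] //= [eXY] [eYZ].
by rewrite addnACA leq_add ?d_triangle ?IH.
Qed.

Lemma between_l1dist_cons x y m X Y M : size X = size M -> size M = size Y ->
  between l1dist (x :: X) (y :: Y) (m :: M) <->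
  between d x y m /\ between l1dist X Y M.
Proof.
move=> eXM eMY; rewrite /between /=.
have := d_triangle x m y; have := l1dist_triangle eXM eMY; lia.
Qed.

Variable med : T -> T -> T -> T.
Hypothesis med_between : forall x y z,
  [/\ between d x y (med x y z), between d x z (med x y z)
    & between d y z (med x y z)].
Hypothesis between_med : forall x y z m,
  between d x y m -> between d x z m -> between d y z m -> m = med x y z.

Fixpoint l1med (X Y Z : seq T) : seq T :=
  match X, Y, Z with
  | x :: X', y :: Y', z :: Z' => med x y z :: l1med X' Y' Z'
  | _, _, _ => [::]
  end.

Lemma size_l1med X Y Z : size X = size Y -> size Y = size Z ->
  size (l1med X Y Z) = size X.
Proof. by elim: X Y Z => [|x X IH] [|y Y] [|z Z] //= [eXY] [eYZ]; rewrite IH. Qed.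

Lemma l1med_between X Y Z : size X = size Y -> size Y = size Z ->
  [/\ between l1dist X Y (l1med X Y Z), between l1dist X Z (l1med X Y Z)
    & between l1dist Y Z (l1med X Y Z)].
Proof.
elim: X Y Z => [|x X IH] [|y Y] [|z Z] //= [eXY] [eYZ].
have eM := size_l1med eXY eYZ.
have [hXY hXZ hYZ] := IH _ _ eXY eYZ; have [hxy hxz hyz] := med_between x y z.
by split; apply: (proj2 (between_l1dist_cons _ _ _ _ _)); try split; congruence.
Qed.

Lemma between_l1med X Y Z M :
  size X = size Y -> size Y = size Z -> size Z = size M ->
  between l1dist X Y M -> between l1dist X Z M -> between l1dist Y Z M ->
  M = l1med X Y Z.
Proof.
elim: X Y Z M => [|x X IH] [|y Y] [|z Z] [|m M] //= [eXY] [eYZ] [eZM].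
have eXM : size X = size M by congruence.
have eYM : size Y = size M by congruence.
move=> /(between_l1dist_cons _ _ _ eXM (esym eYM)) [hxy hXY].
move=> /(between_l1dist_cons _ _ _ eXM (esym eZM)) [hxz hXZ].
move=> /(between_l1dist_cons _ _ _ eYM (esym eZM)) [hyz hYZ].
by rewrite -(between_med hxy hxz hyz) -(IH Y Z M).
Qed.

End L1Distance.

Definition cell := (nat * bool)%type.

Definition cell_dist (p q : cell) : nat := `|p.1 - q.1| + (p.2 != q.2).

Definition median3 (a b c : nat) : nat := maxn (minn a b) (minn (maxn a b) c).

Definition majority (a b c : bool) : bool := [|| a && b, b && c | a && c].

Definition cell_med (p q r : cell) : cell :=
  (median3 p.1 q.1 r.1, majority p.2 q.2 r.2).

Lemma cell_dist_refl p : cell_dist p p = 0.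
Proof. by rewrite /cell_dist eqxx; lia. Qed.

Lemma cell_dist_sym p q : cell_dist p q = cell_dist q p.
Proof. by rewrite /cell_dist eq_sym distnC. Qed.

Lemma cell_dist_triangle p q r : cell_dist p r <= cell_dist p q + cell_dist q r.
Proof.
case: p q r => [a b] [c e] [f g]; rewrite /cell_dist /=.
by case: b e g => [] [] []; lia.
Qed.

Lemma cell_med_between p q r :
  [/\ between cell_dist p q (cell_med p q r), between cell_dist p r (cell_med p q r)
    & between cell_dist q r (cell_med p q r)].
Proof.
case: p q r => [a b] [c e] [f g]; rewrite /between /cell_dist /cell_med /median3 /=.
by case: b e g => [] [] [] /=; split; lia.
Qed.

Lemma between_cell_med p q r m :
  between cell_dist p q m -> between cell_dist p r m -> between cell_dist q r m ->
  m = cell_med p q r.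
Proof.
case: p q r m => [a b] [c e] [f g] [h i].
rewrite /between /cell_dist /cell_med /median3 /=.
by case: b e g i => [] [] [] [] /= hpq hpr hqr; congr (_, _); lia.
Qed.

Lemma majority_mono (a b c a' b' c' : bool) :
  (a -> a') -> (b -> b') -> (c -> c') -> majority a b c -> majority a' b' c'.
Proof.
rewrite /majority => ha hb hc.
by case/or3P=> /andP[h1 h2]; apply/or3P;
  [apply: Or31 | apply: Or32 | apply: Or33]; apply/andP; split; auto.
Qed.

Lemma median3_majority a b c v :
  majority (a == v) (b == v) (c == v) -> median3 a b c = v.
Proof. by rewrite /median3; case/or3P=> /andP[/eqP-> /eqP->]; lia. Qed.

Lemma cell_med_majority p q r c :
  majority (p == c) (q == c) (r == c) -> cell_med p q r = c.
Proof.
case: c p q r => [a b] [a1 b1] [a2 b2] [a3 b3]; rewrite /majority !xpair_eqE.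
case/or3P=> /andP[/andP[/eqP-> /eqP->] /andP[/eqP-> /eqP->]];
  rewrite /cell_med /median3 /majority /=; congr (_, _); try lia.
all: by case: b; rewrite /= ?orbT ?andbF.
Qed.

Lemma ohead_l1med_majority X Y Z c : size X = size Y -> size Y = size Z ->
  majority (ohead X == Some c) (ohead Y == Some c) (ohead Z == Some c) ->
  ohead (l1med cell_med X Y Z) = Some c.
Proof. by case: X Y Z => [|x X] [|y Y] [|z Z] //= _ _ /cell_med_majority->. Qed.

Section PathMetric.
Variables (V : eqType) (vert : V -> Prop) (adj : V -> V -> Prop) (D : V -> V -> nat).

Definition closer_neighbour (x y w : V) : Prop :=
  (adj x w /\ D w y < D x y) \/ (adj w y /\ D x w < D x y).

Hypothesis adj_vert : forall x y, adj x y -> vert x /\ vert y.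
Hypothesis D_refl : forall x, D x x = 0.
Hypothesis D_triangle : forall x y z,
  vert x -> vert y -> vert z -> D x z <= D x y + D y z.
Hypothesis D_adj : forall x y, adj x y -> D x y <= 1.
Hypothesis D_descent : forall x y,
  vert x -> vert y -> x != y -> exists w, closer_neighbour x y w.

Lemma walk_vert_last x p : walk vert adj x p -> vert (last x p).
Proof. by elim: p x => [|y p IH] x //= [_ /IH]. Qed.

Lemma walk_cat x p q :
  walk vert adj x p -> walk vert adj (last x p) q -> walk vert adj x (p ++ q).
Proof. by elim: p x => [|y p IH] x //= [xy walk_p] /(IH _ walk_p). Qed.

Lemma walk_split x p w : walk vert adj x p -> w \in x :: p ->
  exists p1 p2, [/\ p = p1 ++ p2, walk vert adj x p1, last x p1 = w
                  & walk vert adj w p2].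
Proof.
elim: p x => [|y p IH] x /=.
  by move=> vx; rewrite inE => /eqP ->; exists [::], [::].
move=> [xy walk_p]; rewrite in_cons => /orP[/eqP ->|w_p].
  by exists [::], (y :: p); split => //; case/adj_vert: xy.
have [p1 [p2 [-> walk_p1 last_p1 walk_p2]]] := IH y walk_p w_p.
by exists (y :: p1), p2.
Qed.

Lemma dist_le_walk x p : walk vert adj x p -> D x (last x p) <= size p.
Proof.
elim: p x => [|y p IH] x /=; first by rewrite D_refl.
move=> [xy walk_p]; have [vx vy] := adj_vert xy.
have := D_triangle vx vy (walk_vert_last walk_p).
have := IH y walk_p; have := D_adj xy; lia.
Qed.

Lemma geodesic_exists x y : vert x -> vert y ->
  exists p, [/\ walk vert adj x p, last x p = y & size p = D x y].
Proof.
have [m] := ubnP (D x y); elim: m x y => // m IH x y.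
rewrite ltnS => D_lt vx vy; case: (eqVneq x y) => [<-|neq].
  by exists [::]; rewrite D_refl.
have [w [[xw Dw]|[wy Dw]]] := D_descent vx vy neq.
- have [_ vw] := adj_vert xw.
  have [p [walk_p last_p size_p]] := IH w y (leq_trans Dw D_lt) vw vy.
  exists (w :: p); split=> //=.
  have := D_triangle vx vw vy; have := D_adj xw; lia.
- have [vw _] := adj_vert wy.
  have [p [walk_p last_p size_p]] := IH x w (leq_trans Dw D_lt) vx vw.
  exists (p ++ [:: y]); split; rewrite ?last_cat ?size_cat //=.
    by apply: walk_cat; rewrite // last_p.
  have := D_triangle vx vw vy; have := D_adj wy; lia.
Qed.

Lemma on_shortest_pathP x y w : vert x -> vert y ->
  on_shortest_path vert adj x y w <-> vert w /\ between D x y w.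
Proof.
move=> vx vy; split.
  move=> [p [walk_p [last_p [w_p p_min]]]].
  have [p1 [p2 [def_p walk_p1 last_p1 walk_p2]]] := walk_split walk_p w_p.
  have vw : vert w by rewrite -last_p1; apply: walk_vert_last.
  have [q [walk_q last_q size_q]] := geodesic_exists vx vy.
  have := p_min q walk_q last_q; have := dist_le_walk walk_p1.
  have := dist_le_walk walk_p2; rewrite def_p size_cat last_p1.
  have -> : last w p2 = y by rewrite -last_p def_p last_cat last_p1.
  split=> //; have := D_triangle vx vw vy; rewrite /between; lia.
move=> [vw between_w].
have [p1 [walk_p1 last_p1 size_p1]] := geodesic_exists vx vw.
have [p2 [walk_p2 last_p2 size_p2]] := geodesic_exists vw vy.
exists (p1 ++ p2); split; first by apply: walk_cat; rewrite // last_p1.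
split; first by rewrite last_cat last_p1.
split; first by rewrite -cat_cons mem_cat -last_p1 mem_last.
move=> q walk_q last_q; have := dist_le_walk walk_q.
by rewrite last_q size_cat size_p1 size_p2 between_w.
Qed.

Lemma median_graph_of_unique_metric_medians :
  (forall x y z, vert x -> vert y -> vert z ->
     exists! m, vert m /\ [/\ between D x y m, between D x z m & between D y z m]) ->
  median_graph vert adj.
Proof.
move=> medians; split.
  move=> x y vx vy; have [p [walk_p last_p _]] := geodesic_exists vx vy.
  by exists p.
move=> x y z vx vy vz; have [m [[vm [mxy mxz myz]] m_uniq]] := medians x y z vx vy vz.
exists m; split.
  split; [done | split; [|split]].
  - exact/(on_shortest_pathP m vx vy).
  - exact/(on_shortest_pathP m vx vz).
  - exact/(on_shortest_pathP m vy vz).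
move=> m' [vm' [/(on_shortest_pathP m' vx vy)[_ m'xy]]].
move=> [/(on_shortest_pathP m' vx vz)[_ m'xz] /(on_shortest_pathP m' vy vz)[_ m'yz]].
by apply/esym/m_uniq.
Qed.

End PathMetric.

Lemma set_nth_cat (T : Type) (x0 : T) s1 s2 n y : size s1 <= n ->
  set_nth x0 (s1 ++ s2) n y = s1 ++ set_nth x0 s2 (n - size s1) y.
Proof. by elim: s1 n => [|a s1 IH] [|n] //= le_n; rewrite IH. Qed.

Section PellGraph.
Variable k : nat.
Hypothesis k_gt0 : 0 < k.
Local Notation pw := (pell_word k).

Lemma pred_k_lt : k.-1 < k.
Proof. by rewrite ltn_predL. Qed.

Lemma pell_word_cons a t : a < k -> pw (a :: t) = pw t.
Proof. by move=> a_lt /=; rewrite ltn_eqF // a_lt. Qed.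

Lemma pell_word_kk t : pw [:: k, k & t] = pw t.
Proof. by rewrite /= !eqxx. Qed.

Lemma pell_word_cons_inv a t : pw (a :: t) ->
  (a < k /\ pw t) \/ (a = k /\ exists2 t', t = k :: t' & pw t').
Proof.
rewrite /=; case: eqP => [->|_]; last by case/andP; left.
by case: t => [|b t'] //= /andP[/eqP -> pt']; right; split=> //; exists t'.
Qed.

Lemma pell_word_ind (P : seq nat -> Prop) : P [::] ->
  (forall a t, a < k -> pw t -> P t -> P (a :: t)) ->
  (forall t, pw t -> P t -> P [:: k, k & t]) ->
  forall s, pw s -> P s.
Proof.
move=> P0 Pcons Pkk s; have [m] := ubnP (size s).
elim: m s => // m IH [|a t] //= lt_m.
case/pell_word_cons_inv => [[a_lt pt]|[-> [t' def_t pt']]].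
  by apply: Pcons => //; apply: IH.
by rewrite def_t in lt_m *; apply: Pkk => //; apply: IH => //; apply: ltnW.
Qed.

Lemma pell_word_cat x y : pw x -> pw (x ++ y) = pw y.
Proof.
move: x; apply: pell_word_ind => // [a t a_lt _ IH|t _ IH].
  by rewrite cat_cons pell_word_cons.
by rewrite !cat_cons pell_word_kk.
Qed.

Fixpoint pell_code (s : seq nat) : seq cell :=
  match s with
  | [::] => [::]
  | a :: t =>
      if a == k then
        if t is _ :: t' then [:: (k.-1, true), (k.-1, false) & pell_code t']
        else [:: (k.-1, true)]
      else (a, false) :: pell_code t
  end.

Lemma pell_code_cons a t : a < k -> pell_code (a :: t) = (a, false) :: pell_code t.
Proof. by move=> a_lt /=; rewrite ltn_eqF. Qed.

Lemma pell_code_kk t :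
  pell_code [:: k, k & t] = [:: (k.-1, true), (k.-1, false) & pell_code t].
Proof. by rewrite /= eqxx. Qed.

Lemma size_pell_code s : size (pell_code s) = size s.
Proof.
have [m] := ubnP (size s); elim: m s => // m IH [|a t] //= lt_m.
case: eqP => _; last by rewrite /= IH.
by case: t lt_m => [|b t'] //= lt_m; rewrite IH // ltnW.
Qed.

Lemma pell_code_cat x y : pw x -> pell_code (x ++ y) = pell_code x ++ pell_code y.
Proof.
move: x; apply: pell_word_ind => // [a t a_lt _ IH|t _ IH].
  by rewrite cat_cons !pell_code_cons // IH.
by rewrite !cat_cons !pell_code_kk IH.
Qed.

Lemma pell_code_inj u v : pw u -> pw v -> pell_code u = pell_code v -> u = v.
Proof.
move=> pu; move: u pu v; apply: pell_word_ind => [|a t a_lt pt IH|t pt IH] v pv.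
- by case: v pv => // b s _ /(congr1 size); rewrite !size_pell_code.
- case: v pv => [|b s]; first by rewrite pell_code_cons.
  case/pell_word_cons_inv => [[b_lt ps]|[-> [s' -> _]]].
    by rewrite !pell_code_cons // => -[-> /IH ->].
  by rewrite pell_code_cons // pell_code_kk.
- case: v pv => [|b s]; first by rewrite pell_code_kk.
  case/pell_word_cons_inv => [[b_lt _]|[-> [s' -> ps']]].
    by rewrite pell_code_kk pell_code_cons.
  by rewrite !pell_code_kk => -[/IH ->].
Qed.

Fixpoint pell_coded (c : seq cell) : bool :=
  if c is p :: r then
    [&& p.1 < k, p.2 ==> (p.1 == k.-1) && (ohead r == Some (k.-1, false))
      & pell_coded r]
  else true.

Lemma pell_coded_code s : pw s -> pell_coded (pell_code s).
Proof.
move: s; apply: pell_word_ind => // [a t a_lt _ IH|t _ IH].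
  by rewrite pell_code_cons //= a_lt IH.
by rewrite pell_code_kk /= pred_k_lt !eqxx IH.
Qed.

Lemma pell_coded_surj c : pell_coded c -> exists2 s, pw s & pell_code s = c.
Proof.
have [m] := ubnP (size c); elim: m c => // m IH [|[x b] r] /= lt_m.
  by exists [::].
case/and3P=> x_lt; case: b => /=.
  case/andP=> /eqP->; case: r lt_m => [|q r] //= lt_m /eqP[->] /and3P[_ _ coded_r].
  have [s ps <-] := IH r (ltnW lt_m) coded_r.
  by exists [:: k, k & s]; rewrite ?pell_word_kk ?pell_code_kk.
move=> _ coded_r; have [s ps <-] := IH r lt_m coded_r.
by exists (x :: s); rewrite ?pell_word_cons ?pell_code_cons.
Qed.

Lemma pell_coded_l1med X Y Z : size X = size Y -> size Y = size Z ->
  pell_coded X -> pell_coded Y -> pell_coded Z -> pell_coded (l1med cell_med X Y Z).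
Proof.
elim: X Y Z => [|[x bx] X IH] [|[y b_y] Y] [|[z bz] Z] //= [eXY] [eYZ].
case/and3P=> x_lt hx cX /and3P[y_lt hy cY] /and3P[z_lt hz cZ].
apply/and3P; split; [rewrite /median3; lia | apply/implyP => maj | exact: IH].
have [hx1 hx2] : (bx -> x == k.-1) /\ (bx -> ohead X == Some (k.-1, false)).
  by split=> /(implyP hx)/andP[].
have [hy1 hy2] : (b_y -> y == k.-1) /\ (b_y -> ohead Y == Some (k.-1, false)).
  by split=> /(implyP hy)/andP[].
have [hz1 hz2] : (bz -> z == k.-1) /\ (bz -> ohead Z == Some (k.-1, false)).
  by split=> /(implyP hz)/andP[].
rewrite (median3_majority (majority_mono hx1 hy1 hz1 maj)) eqxx /=.
by rewrite (ohead_l1med_majority eXY eYZ (majority_mono hx2 hy2 hz2 maj)).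
Qed.

Definition pell_dist (u v : seq nat) : nat :=
  l1dist cell_dist (pell_code u) (pell_code v).

Lemma pell_dist_cat x u v : pw x -> pell_dist (x ++ u) (x ++ v) = pell_dist u v.
Proof.
move=> px; rewrite /pell_dist !pell_code_cat // l1dist_cat //.
by rewrite (l1dist_refl cell_dist_refl).
Qed.

Lemma pell_dist_triangle n u v w :
  pell_vertex n k u -> pell_vertex n k v -> pell_vertex n k w ->
  pell_dist u w <= pell_dist u v + pell_dist v w.
Proof.
move=> [su _] [sv _] [sw _].
by apply: (l1dist_triangle cell_dist_triangle); rewrite !size_pell_code ?su ?sv.
Qed.

Lemma pell_word_split u : pw u -> forall p, p < size u -> nth 0 u p < k ->
  exists x y, [/\ u = x ++ nth 0 u p :: y, size x = p, pw x & pw y].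
Proof.
move: u; apply: pell_word_ind => [|a t a_lt pt IH|t pt IH] [|p] //=.
- by move=> _ _; exists [::], t.
- move=> p_lt t_p; have [x [y [def_t size_x px py]]] := IH p p_lt t_p.
  by exists (a :: x), y; rewrite pell_word_cons // /= -def_t size_x.
- by rewrite ltnn.
- case: p => [|p] /=; first by rewrite ltnn.
  move=> p_lt t_p; have [x [y [def_t size_x px py]]] := IH p p_lt t_p.
  by exists [:: k, k & x], y; rewrite pell_word_kk /= -def_t size_x.
Qed.

Lemma pell_dist_step1 u v : pw u -> pell_step1 k u v -> pell_dist u v = 1.
Proof.
move=> pu [p [j [p_lt [j_lt [u_p ->]]]]].
have u_p_lt : nth 0 u p < k by rewrite u_p ltnW.
have [x [y []]] := pell_word_split pu p_lt u_p_lt.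
rewrite u_p => -> <- px py; rewrite set_nth_cat // subnn /=.
rewrite /pell_dist !pell_code_cat // !pell_code_cons ?(ltnW j_lt) //.
rewrite l1dist_cat // (l1dist_refl cell_dist_refl) /=.
by rewrite (l1dist_refl cell_dist_refl) /cell_dist /=; lia.
Qed.

Lemma pell_dist_step2 u v : pw u -> pell_step2 k u v -> pell_dist u v = 1.
Proof.
move=> pu [p [p_lt [u_p [u_p1 ->]]]].
have u_p_lt : nth 0 u p < k by rewrite u_p pred_k_lt.
have [x [y [def_u size_x px py]]] := pell_word_split pu (ltnW p_lt) u_p_lt.
rewrite u_p in def_u; rewrite def_u size_cat -size_x in p_lt.
rewrite def_u nth_cat -size_x ltnNge leqnSn subSnn in u_p1.
case: y => [|c y] in def_u p_lt u_p1 py *; first by rewrite addn1 ltnn in p_lt.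
move: u_p1 => /= c_eq; rewrite c_eq pell_word_cons ?pred_k_lt // in py.
rewrite def_u c_eq -size_x !set_nth_cat ?leqnSn // subnn subSnn /=.
rewrite /pell_dist !pell_code_cat // pell_code_kk !pell_code_cons ?pred_k_lt //.
rewrite l1dist_cat // (l1dist_refl cell_dist_refl) /=.
by rewrite (l1dist_refl cell_dist_refl) /cell_dist /=; lia.
Qed.

Lemma pell_dist_adj n u v : pell_adj n k u v -> pell_dist u v = 1.
Proof.
move=> [[_ pu] [[_ pv] [|[|[|]]]]] step.
- exact: pell_dist_step1 step.
- by rewrite /pell_dist (l1dist_sym cell_dist_sym); apply: pell_dist_step1 step.
- exact: pell_dist_step2 step.
- by rewrite /pell_dist (l1dist_sym cell_dist_sym); apply: pell_dist_step2 step.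
Qed.

Lemma pell_step1_cat x u v : pell_step1 k u v -> pell_step1 k (x ++ u) (x ++ v).
Proof.
move=> step; elim: x => //= a x [p [j [p_lt [j_lt [xu_p ->]]]]].
by exists p.+1, j.
Qed.

Lemma pell_step2_cat x u v : pell_step2 k u v -> pell_step2 k (x ++ u) (x ++ v).
Proof.
move=> step; elim: x => //= a x [p [p_lt [xu_p [xu_p1 ->]]]].
by exists p.+1.
Qed.

Lemma pell_adj_sym n u v : pell_adj n k u v -> pell_adj n k v u.
Proof.
move=> [vu [vv steps]]; split=> //; split=> //.
by case: steps => [h|[h|[h|h]]];
  [right; left | left | right; right; right | right; right; left].
Qed.

Lemma pell_adj_cat x n u v : pw x ->
  pell_adj n k u v -> pell_adj (size x + n) k (x ++ u) (x ++ v).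
Proof.
move=> px [[su pu] [[sv pv] steps]].
split; first by rewrite /pell_vertex size_cat su pell_word_cat.
split; first by rewrite /pell_vertex size_cat sv pell_word_cat.
case: steps => [/(pell_step1_cat x) h|[/(pell_step1_cat x) h|
               [/(pell_step2_cat x) h|/(pell_step2_cat x) h]]];
  by [left | right; left | right; right; left | right; right; right].
Qed.

Lemma pell_adj_succ a t : a.+1 < k -> pw t ->
  pell_adj (size t).+1 k (a :: t) (a.+1 :: t).
Proof.
move=> a_lt pt; split; first by split; rewrite // pell_word_cons // ltnW.
split; first by split; rewrite // pell_word_cons.
by left; exists 0, a.
Qed.

Lemma pell_adj_kk t : pw t -> pell_adj (size t).+2 k [:: k.-1, k.-1 & t] [:: k, k & t].
Proof.
move=> pt; split; first by split; rewrite // !pell_word_cons ?pred_k_lt.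
split; first by split; rewrite // pell_word_kk.
by right; right; left; exists 0.
Qed.

Lemma closer_neighbour_cat x n u v w : pw x ->
  closer_neighbour (pell_adj n k) pell_dist u v w ->
  closer_neighbour (pell_adj (size x + n) k) pell_dist (x ++ u) (x ++ v) (x ++ w).
Proof.
move=> px; rewrite /closer_neighbour !pell_dist_cat //.
by case=> -[/(pell_adj_cat px) adj_w lt_w]; [left | right].
Qed.

(* Raise the smaller of two different first letters, turn a leading kk facing
   a letter into (k-1)(k-1), or else recurse on the tails. *)
Lemma pell_descent u v : pw u -> pw v -> size u = size v -> u != v ->
  exists w, closer_neighbour (pell_adj (size u) k) pell_dist u v w.
Proof.
move=> pu; move: u pu v; apply: pell_word_ind => [|a t a_lt pt IH|t pt IH] [|b s] pv //.
- case/pell_word_cons_inv: pv => [[b_lt ps]|[-> [s' -> ps']]] /= [es] neq.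
  + case: (ltngtP a b) => [a_lt_b|b_lt_a|eq_ab].
    * have a1_lt : a.+1 < k := leq_ltn_trans a_lt_b b_lt.
      exists (a.+1 :: t); left; split; first exact: pell_adj_succ.
      by rewrite /pell_dist !pell_code_cons //= /cell_dist /=; lia.
    * have b1_lt : b.+1 < k := leq_ltn_trans b_lt_a a_lt.
      exists (b.+1 :: s); right; split.
        by rewrite es; apply/pell_adj_sym/pell_adj_succ.
      by rewrite /pell_dist !pell_code_cons //= /cell_dist /=; lia.
    * rewrite -eq_ab in neq *.
      have [|w' step] := IH s ps es; first by apply: contraNneq neq => ->.
      exists (a :: w'); apply: (@closer_neighbour_cat [:: a]) step.
      by rewrite pell_word_cons.
  + exists [:: k.-1, k.-1 & s']; right; split; first by rewrite es; apply: pell_adj_kk.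
    rewrite /pell_dist pell_code_kk !pell_code_cons ?pred_k_lt //= /cell_dist /=; lia.
- case/pell_word_cons_inv: pv => [[b_lt ps]|[-> [s' -> ps']]] /= [es] neq.
  + exists [:: k.-1, k.-1 & t]; left; split; first exact/pell_adj_sym/pell_adj_kk.
    rewrite /pell_dist pell_code_kk !pell_code_cons ?pred_k_lt //= /cell_dist /=; lia.
  + have [|w' step] := IH s' ps' es; first by apply: contraNneq neq => ->.
    exists [:: k, k & w']; apply: (@closer_neighbour_cat [:: k; k]) step.
    by rewrite pell_word_kk.
Qed.

Lemma pell_metric_median n x y z :
  pell_vertex n k x -> pell_vertex n k y -> pell_vertex n k z ->
  exists! m, pell_vertex n k m /\
    [/\ between pell_dist x y m, between pell_dist x z m & between pell_dist y z m].
Proof.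
move=> [sx px] [sy py] [sz pz].
have eXY : size (pell_code x) = size (pell_code y) by rewrite !size_pell_code sx sy.
have eYZ : size (pell_code y) = size (pell_code z) by rewrite !size_pell_code sy sz.
have [m pm code_m] := pell_coded_surj (pell_coded_l1med eXY eYZ
  (pell_coded_code px) (pell_coded_code py) (pell_coded_code pz)).
exists m; split.
  split; first by split; rewrite // -size_pell_code code_m size_l1med // size_pell_code.
  rewrite /between /pell_dist code_m.
  exact: (l1med_between cell_dist_triangle cell_med_between).
move=> m' [[sm' pm'] [m'xy m'xz m'yz]]; apply: pell_code_inj => //; rewrite code_m.
apply/esym/(between_l1med cell_dist_triangle between_cell_med eXY eYZ) => //.
by rewrite !size_pell_code sz sm'.
Qed.

End PellGraph.

Theorem proposition5p7 (n k : nat) : 1 <= n -> 2 <= k -> pell_graph_median n k.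
Proof.
move=> _ k_ge2; have k_gt0 : 0 < k by apply: ltnW.
apply: (median_graph_of_unique_metric_medians (D := pell_dist k)).
- by move=> u v [vu [vv _]].
- move=> u; exact: (l1dist_refl cell_dist_refl).
- exact: pell_dist_triangle.
- by move=> u v /(pell_dist_adj k_gt0) ->.
- move=> u v [su pu] [sv pv] neq; rewrite -su.
  by apply: (pell_descent k_gt0) => //; rewrite su sv.
- exact: (pell_metric_median k_gt0).
Qed.
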